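(* Let $d,k$ be integers with $2\leq d\leq\frac{k+1}{2}$, $\Sigma_k=\{\sigma_1,\ldots,\sigma_k\}$, $\Sigma_d=\{\sigma_1,\ldots,\sigma_d\}$, $n\geq1$, and let $\mathcal{G}\subseteq\Sigma_k^n$. Put $\mathcal{G}'=\mathcal{G}\cap\Sigma_d^n$ and $\mathcal{G}''=\{f(g_1)f(g_2)\cdots f(g_n)\mid g=g_1\cdots g_n\in\mathcal{G}\}$, where $f:\Sigma_k\to\Sigma_k$ is $f(\sigma_i)=\sigma_{\max\{i,d\}}$. Suppose $\mathcal{G}$ is closed under replacing $\sigma_i$ by $\sigma_j$ for any $i>d$ and $j\in[k]$, i.e. whenever $g\in\mathcal{G}$ has the letter $\sigma_i$ with $i>d$ in some coordinate, the word obtained by changing that coordinate to any letter of $\Sigma_k$ also lies in $\mathcal{G}$. Then either $|\mathcal{G}'|=|\mathcal{G}''|=0$ or $\log_{k-d+1}|\mathcal{G}''|\leq\log_d|\mathcal{G}'|$. *)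

From mathcomp Require Import all_boot.
From Stdlib Require Import Reals.
Set Implicit Arguments. Unset Strict Implicit. Unset Printing Implicit Defensive.

(* Alphabet Sigma_k = {sigma_1,...,sigma_k} is encoded as 'I_k, with
   sigma_i  <->  the ordinal of value i-1.  Words of length n are
   finite functions 'I_n -> 'I_k. *)
Definition word (n k : nat) := {ffun 'I_n -> 'I_k}.

Definition in_Sigma_d (n k d : nat) (g : word n k) : bool :=
  [forall p : 'I_n, (g p : nat) < d].

Definition Gprime (n k d : nat) (G : {set word n k}) : {set word n k} :=
  [set g in G | in_Sigma_d d g].

(* f(sigma_i) = sigma_{max(i,d)}; 0-indexed: j |-> max(j, d-1).
   (insubd only falls back to j when d > k, excluded by the hypotheses.) *)
Definition fletter (k d : nat) (j : 'I_k) : 'I_k := insubd j (maxn j d.-1).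

Definition fword (n k d : nat) (g : word n k) : word n k :=
  [ffun p => fletter d (g p)].

Definition Gsecond (n k d : nat) (G : {set word n k}) : {set word n k} :=
  [set fword d g | g in G].

Definition replace_at (n k : nat) (g : word n k) (p : 'I_n) (j : 'I_k)
  : word n k := [ffun q => if q == p then j else g q].

Definition closed_repl (n k d : nat) (G : {set word n k}) : Prop :=
  forall g, g \in G -> forall (p : 'I_n), d <= (g p : nat) ->
    forall j : 'I_k, replace_at g p j \in G.

Definition logb (b x : R) : R := (ln x / ln b)%R.

(* Put p = log_d (k - d + 1) >= 1; we show |G''| <= |G'|^p by induction on n,
   splitting the words by their first letter.  By closedness, all slices with a
   high first letter sigma_(d+1), ..., sigma_k equal one set H, which lies in
   every other slice.  With U the union of the d low slices, counting the low
   slices gives |G'| >= |U'| + (d - 1)|H'|, while f sends every low first letter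
   to sigma_d and fixes the k - d high ones, so |G''| <= |U''| + (k - d)|H''|.
   Since k - d = d^p - 1, the induction closes with
   x^p + (d^p - 1) y^p <= (x + (d - 1) y)^p  for 0 <= y <= x. *)

From mathcomp Require Import all_boot zify.
From Stdlib Require Import Reals Lra.
Set Implicit Arguments. Unset Strict Implicit. Unset Printing Implicit Defensive.

Section RealPowers.
Local Open Scope R_scope.

Lemma Rpower_1_l (p : R) : Rpower 1 p = 1.
Proof. by rewrite /Rpower ln_1 Rmult_0_r exp_0. Qed.

Lemma derivable_pt_lim_Rpower_shift (p c t : R) : 0 < t + c ->
  derivable_pt_lim (fun x => Rpower (x + c) p) t (p * Rpower (t + c) (p - 1)).
Proof.
move=> htc; rewrite -[X in derivable_pt_lim _ _ X]Rmult_1_r.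
apply: (derivable_pt_lim_comp (fun x => x + c) (fun x => Rpower x p)).
  rewrite -[1]Rplus_0_r; apply: derivable_pt_lim_plus.
    exact: derivable_pt_lim_id.
  exact: derivable_pt_lim_const.
exact: derivable_pt_lim_power.
Qed.

(* For p >= 1 the map u |-> (u + c)^p - u^p has derivative
   p ((u + c)^(p-1) - u^(p-1)) >= 0, so it is nondecreasing. *)
Lemma Rpower_shift_gap_le (p c u : R) : 1 <= p -> 0 <= c -> 1 <= u ->
  Rpower (1 + c) p - 1 <= Rpower (u + c) p - Rpower u p.
Proof.
move=> hp hc hu; rewrite -{2}(Rpower_1_l p).
have [<-|hu1] : 1 = u \/ 1 < u by lra.
  exact: Rle_refl.
have [t [gap ht]] := MVT_cor2 (fun x => Rpower (x + c) p - Rpower x p)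
  (fun t => p * Rpower (t + c) (p - 1) - p * Rpower t (p - 1)) 1 u hu1
  (fun t ht => derivable_pt_lim_minus _ _ _ _ _
     (@derivable_pt_lim_Rpower_shift p c t ltac:(lra))
     (@derivable_pt_lim_power t p ltac:(lra))).
have : Rpower t (p - 1) <= Rpower (t + c) (p - 1) by apply: Rle_Rpower_l; lra.
move=> hmono; simpl in gap.
have : 0 <= (p * Rpower (t + c) (p - 1) - p * Rpower t (p - 1)) * (u - 1).
  by apply: Rmult_le_pos; nra.
lra.
Qed.

(* [Rpower 0 p] is [exp (p * ln 0) = 1] in Stdlib ([ln 0 = 0]); [rpow]
   fixes the value at nonpositive arguments to 0. *)
Definition rpow (p x : R) : R := if Rle_dec x 0 then 0 else Rpower x p.

Lemma rpow0 (p : R) : rpow p 0 = 0.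
Proof. by rewrite /rpow; case: Rle_dec => // [[]]; apply: Rle_refl. Qed.

Lemma rpow_gt0 (p x : R) : 0 < x -> rpow p x = Rpower x p.
Proof. by move=> hx; rewrite /rpow; case: Rle_dec => // h; lra. Qed.

Lemma rpow_ge0 (p x : R) : 0 <= rpow p x.
Proof. by rewrite /rpow; case: Rle_dec => h; [apply: Rle_refl | apply/Rlt_le/exp_pos]. Qed.

Lemma rpow_le (p x y : R) : 0 <= p -> x <= y -> rpow p x <= rpow p y.
Proof.
move=> hp hxy; rewrite /rpow; case: Rle_dec => hx; first exact: rpow_ge0.
by case: Rle_dec => hy; [lra | apply: Rle_Rpower_l; lra].
Qed.

Lemma rpow_add_mul_ge (p c a b : R) : 1 <= p -> 0 <= c -> 0 <= b -> b <= a ->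
  rpow p a + (Rpower (1 + c) p - 1) * rpow p b <= rpow p (a + c * b).
Proof.
move=> hp hc hb hba.
have [<-|hb0] : 0 = b \/ 0 < b by lra.
  by rewrite rpow0 Rmult_0_r Rmult_0_r !Rplus_0_r; apply: Rle_refl.
rewrite !rpow_gt0; try nra.
have hu : 1 <= a / b.
  by apply: (Rmult_le_reg_r b) => //; rewrite Rmult_1_l /Rdiv Rmult_assoc Rinv_l; lra.
have gap := Rpower_shift_gap_le hp hc hu.
have ha : a = b * (a / b) by field; lra.
move: (a / b) hu gap ha => u hu gap ->.
have -> : b * u + c * b = b * (u + c) by ring.
rewrite -!Rpower_mult_distr; try lra.
have : 0 < Rpower b p by apply: exp_pos.
nra.
Qed.

Lemma ln_gt0 (x : R) : 1 < x -> 0 < ln x.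
Proof. by move=> hx; rewrite -ln_1; apply: ln_increasing; lra. Qed.

Lemma ln_le (x y : R) : 0 < x -> x <= y -> ln x <= ln y.
Proof.
move=> hx [hxy|<-]; [exact/Rlt_le/ln_increasing | exact: Rle_refl].
Qed.

Lemma Rpower_ln_ratio (b m : R) : 1 < b -> 0 < m -> Rpower b (ln m / ln b) = m.
Proof.
move=> hb hm; have := ln_gt0 hb => lnb.
by rewrite /Rpower (_ : ln m / ln b * ln b = ln m) ?exp_ln //; field; lra.
Qed.

Lemma ln_ratio_ge1 (b m : R) : 1 < b -> b <= m -> 1 <= ln m / ln b.
Proof.
move=> hb hbm; have := ln_gt0 hb => lnb.
have : ln b <= ln m by apply: ln_le; lra.
move=> h; apply: (Rmult_le_reg_r (ln b)) => //.
by rewrite Rmult_1_l /Rdiv Rmult_assoc Rinv_l; lra.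
Qed.

Lemma logb_le_of_le_Rpower (b m x y : R) : 1 < b -> 1 < m -> 0 < x ->
  x <= Rpower y (ln m / ln b) -> logb m x <= logb b y.
Proof.
move=> hb hm hx hxy; have := ln_gt0 hb => lnb; have := ln_gt0 hm => lnm.
have : ln x <= ln m / ln b * ln y.
  by rewrite -ln_Rpower; apply: ln_le.
move=> h; rewrite /logb; apply: (Rmult_le_reg_r (ln m)) => //.
rewrite /Rdiv Rmult_assoc Rinv_l; last lra.
move: h; rewrite /Rdiv => h; nra.
Qed.

End RealPowers.

Section Words.
Variables (n k : nat).

Definition wcons (j : 'I_k) (w : word n k) : word n.+1 k :=
  [ffun i => if unlift ord0 i is Some i' then w i' else j].

Definition wbehead (g : word n.+1 k) : word n k := [ffun i => g (lift ord0 i)].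

Lemma wcons0 j w : wcons j w ord0 = j.
Proof. by rewrite ffunE unlift_none. Qed.

Lemma wconsS j w i : wcons j w (lift ord0 i) = w i.
Proof. by rewrite ffunE liftK. Qed.

Lemma wconsK j : cancel (wcons j) wbehead.
Proof. by move=> w; apply/ffunP=> i; rewrite ffunE wconsS. Qed.

Lemma wcons_inj j : injective (wcons j).
Proof. exact: can_inj (wconsK j). Qed.

Lemma wbeheadK (g : word n.+1 k) : wcons (g ord0) (wbehead g) = g.
Proof. by apply/ffunP=> i; rewrite ffunE; case: unliftP => [i' ->|->]; rewrite ?ffunE. Qed.

Lemma replace_at_wconsS j w p j' :
  replace_at (wcons j w) (lift ord0 p) j' = wcons j (replace_at w p j').
Proof.
apply/ffunP=> i; rewrite ffunE; case: (unliftP ord0 i) => [i' ->|->].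
  by rewrite (inj_eq (@lift_inj _ ord0)) !wconsS ffunE.
by rewrite (negbTE (neq_lift _ _)) !wcons0.
Qed.

Lemma replace_at_wcons0 j w j' : replace_at (wcons j w) ord0 j' = wcons j' w.
Proof.
apply/ffunP=> i; rewrite ffunE; case: (unliftP ord0 i) => [i' ->|->].
  by rewrite eq_sym (negbTE (neq_lift _ _)) !wconsS.
by rewrite eqxx wcons0.
Qed.

Definition slice (A : {set word n.+1 k}) (j : 'I_k) : {set word n k} :=
  [set w | wcons j w \in A].

Lemma card_slices (A : {set word n.+1 k}) : #|A| = \sum_(j < k) #|slice A j|.
Proof.
rewrite -sum1_card (partition_big (fun g : word n.+1 k => g ord0) predT) //=.
apply: eq_bigr => j _; rewrite sum1dep_card.
have -> : [set g | (g \in A) && (g ord0 == j)] = wcons j @: slice A j.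
  apply/setP=> g; rewrite inE; apply/andP/imsetP => [[gA /eqP gj]|[w]].
    by exists (wbehead g); rewrite ?inE -gj wbeheadK.
  by rewrite inE => wA ->; rewrite wcons0 eqxx.
exact/card_imset/wcons_inj.
Qed.

End Words.

Lemma card_bigcup_le (T I : finType) (P : pred I) (A : I -> {set T}) :
  #|\bigcup_(i | P i) A i| <= \sum_(i | P i) #|A i|.
Proof.
elim/big_ind2: _ => [|X1 m1 X2 m2 h1 h2|//]; first by rewrite cards0.
exact: leq_trans (leq_card_setU _ _) (leq_add h1 h2).
Qed.

(* Every element of [B] is counted [#|P|] times on the right but at most once
   on the left. *)
Lemma card_bigcup_common_subset (T I : finType) (P : pred I) (A : I -> {set T})
    (B : {set T}) :
  (forall i, P i -> B \subset A i) -> 0 < #|P| ->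
  #|\bigcup_(i | P i) A i| + (#|P| - 1) * #|B| <= \sum_(i | P i) #|A i|.
Proof.
move=> sBA hP.
have cover : \bigcup_(i | P i) A i \subset B :|: \bigcup_(i | P i) (A i :\: B).
  apply/subsetP=> x /bigcupP[i Pi xA]; rewrite inE.
  by case xB: (x \in B) => //=; apply/bigcupP; exists i; rewrite // inE xB.
have split : \sum_(i | P i) #|A i| = \sum_(i | P i) #|A i :\: B| + #|P| * #|B|.
  rewrite -sum_nat_const -big_split /=; apply: eq_bigr => i Pi.
  by rewrite cardsD (setIidPr (sBA i Pi)) subnK // subset_leq_card // sBA.
have := leq_trans (subset_leq_card cover) (leq_card_setU _ _).
have := card_bigcup_le P (fun i => A i :\: B).
rewrite split mulnBl mul1n; have := leq_pmull #|B| hP; lia.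
Qed.

Section Letters.
Variables (n k d : nat).
Hypotheses (d_gt0 : 0 < d) (d_le_k : d <= k).

Lemma fletterE (j : 'I_k) : (fletter d j : nat) = maxn j d.-1.
Proof. by rewrite /fletter val_insubd; case: ifP => //; have := ltn_ord j; lia. Qed.

Lemma fletter_eq (i j : 'I_k) :
  (fletter d i == j) = if d <= j then i == j else (j == d.-1 :> nat) && (i < d).
Proof. by rewrite -val_eqE /= fletterE; case: ifP => hj; rewrite -?val_eqE /=; lia. Qed.

Lemma fword_wcons j (w : word n k) :
  fword d (wcons j w) = wcons (fletter d j) (fword d w).
Proof.
apply/ffunP=> i; rewrite ffunE; case: (unliftP ord0 i) => [i' ->|->].
  by rewrite !wconsS ffunE.
by rewrite !wcons0.
Qed.

Lemma in_Sigma_d_wcons j (w : word n k) :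
  in_Sigma_d d (wcons j w) = (j < d) && in_Sigma_d d w.
Proof.
apply/forallP/andP => [h|[hj /forallP h] i].
  split; first by have := h ord0; rewrite wcons0.
  by apply/forallP=> i; have := h (lift ord0 i); rewrite wconsS.
by case: (unliftP ord0 i) => [i' ->|->]; rewrite ?wconsS ?wcons0.
Qed.

Lemma Gprime_subset (A B : {set word n k}) :
  A \subset B -> Gprime d A \subset Gprime d B.
Proof. by move=> /subsetP sAB; apply/subsetP=> w; rewrite !inE => /andP[/sAB -> ->]. Qed.

Lemma Gprime_bigcup (I : finType) (P : pred I) (F : I -> {set word n k}) :
  Gprime d (\bigcup_(i | P i) F i) = \bigcup_(i | P i) Gprime d (F i).
Proof.
apply/setP=> w; rewrite inE; apply/andP/bigcupP => [[/bigcupP[i Pi wF] wS]|[i Pi]].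
  by exists i; rewrite // inE wF.
by rewrite inE => /andP[wF ->]; split=> //; apply/bigcupP; exists i.
Qed.

Lemma slice_Gprime (G : {set word n.+1 k}) j :
  slice (Gprime d G) j = if j < d then Gprime d (slice G j) else set0.
Proof.
by apply/setP=> w; rewrite !inE in_Sigma_d_wcons; case: ifP; rewrite ?inE ?andbF.
Qed.

Lemma card_Gprime_slices (G : {set word n.+1 k}) :
  #|Gprime d G| = \sum_(j < k | j < d) #|Gprime d (slice G j)|.
Proof.
rewrite card_slices [RHS]big_mkcond; apply: eq_bigr => j _.
by rewrite slice_Gprime; case: ifP; rewrite ?cards0.
Qed.

Lemma slice_Gsecond (G : {set word n.+1 k}) j :
  slice (Gsecond d G) j = Gsecond d (\bigcup_(i | fletter d i == j) slice G i).
Proof.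
apply/setP=> w; rewrite inE; apply/imsetP/imsetP => [[g gG]|[u /bigcupP[i /eqP <-]]].
  rewrite -(wbeheadK g) fword_wcons => e.
  exists (wbehead g); last by have := congr1 (@wbehead _ _) e; rewrite !wconsK.
  apply/bigcupP; exists (g ord0); last by rewrite inE wbeheadK.
  by have := congr1 (fun x : word n.+1 k => x ord0) e; rewrite !wcons0 => ->.
by rewrite inE => uG ->; exists (wcons i u); rewrite ?fword_wcons.
Qed.

Lemma closed_repl_slice (G : {set word n.+1 k}) j :
  closed_repl d G -> closed_repl d (slice G j).
Proof.
move=> clG w; rewrite inE => wG p hp j'.
by rewrite inE -replace_at_wconsS; apply: clG; rewrite ?wconsS.
Qed.

Lemma closed_repl_bigcup (I : finType) (P : pred I) (F : I -> {set word n k}) :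
  (forall i, P i -> closed_repl d (F i)) -> closed_repl d (\bigcup_(i | P i) F i).
Proof.
move=> clF g /bigcupP[i Pi gF] p hp j.
by apply/bigcupP; exists i => //; apply: clF.
Qed.

Lemma closed_slice_subset (G : {set word n.+1 k}) (j i : 'I_k) :
  closed_repl d G -> d <= j -> slice G j \subset slice G i.
Proof.
move=> clG hj; apply/subsetP=> w; rewrite !inE => wG.
by rewrite -(replace_at_wcons0 j); apply: clG; rewrite ?wcons0.
Qed.

End Letters.

Section FirstLetter.
Variables (n k d : nat) (G : {set word n.+1 k}) (j0 : 'I_k).
Hypotheses (d_gt0 : 0 < d) (d_le_j0 : d <= j0) (clG : closed_repl d G).

Let d_le_k : d <= k. Proof. exact: leq_trans d_le_j0 (ltnW (ltn_ord j0)). Qed.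
Let U := \bigcup_(i : 'I_k | i < d) slice G i.
Let H := slice G j0.

Lemma slice_high_subset_low : H \subset U.
Proof.
have i_lt_k : 0 < k by apply: leq_trans d_gt0 d_le_k.
apply: subset_trans (closed_slice_subset (Ordinal i_lt_k) clG d_le_j0) _.
exact: bigcup_sup.
Qed.

Lemma slice_Gsecond_le (j : 'I_k) : #|slice (Gsecond d G) j| <=
  (if j == d.-1 :> nat then #|Gsecond d U| else 0) +
  (if d <= j then #|Gsecond d H| else 0).
Proof.
rewrite slice_Gsecond //; have [hjd|hjd] := leqP d j.
  rewrite (eq_bigl (pred1 j)) => [|i]; last by rewrite fletter_eq // hjd.
  rewrite big_pred1_eq ifF; last lia.
  suff -> : slice G j = H by [].
  by apply/eqP; rewrite eqEsubset !(closed_slice_subset _ clG).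
rewrite (eq_bigl (fun i : 'I_k => (j == d.-1 :> nat) && (i < d))) => [|i]; last first.
  by rewrite fletter_eq // leqNgt hjd.
rewrite addn0; case: eqP => _ //.
by rewrite big_pred0 // /Gsecond imset0 cards0.
Qed.

Lemma card_Gsecond_le : #|Gsecond d G| <= #|Gsecond d U| + (k - d) * #|Gsecond d H|.
Proof.
rewrite card_slices; apply: leq_trans; first by apply: leq_sum => j _; apply: slice_Gsecond_le.
rewrite big_split /= -!big_mkcond /= (big_ord1_eq _ (fun _ => #|Gsecond d U|)) ifT; last lia.
rewrite leq_add2l -(sum_nat_const_nat d k) (big_geq_mkord d k predT (fun _ => _)).
exact: leqnn.
Qed.

Lemma card_Gprime_ge : #|Gprime d U| + (d - 1) * #|Gprime d H| <= #|Gprime d G|.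
Proof.
have card_low : #|(fun i : 'I_k => i < d)| = d.
  by rewrite -sum1_card -(big_ord_widen _ (fun _ => 1) d_le_k) sum_nat_const card_ord muln1.
have := @card_bigcup_common_subset _ _ (fun i : 'I_k => i < d)
  (fun i => Gprime d (slice G i)) (Gprime d H).
rewrite Gprime_bigcup card_Gprime_slices card_low; apply=> // i _.
exact: Gprime_subset (closed_slice_subset i clG d_le_j0).
Qed.

End FirstLetter.

Lemma INR_leq (m n : nat) : m <= n -> (INR m <= INR n)%R.
Proof. by move=> /leP; apply: le_INR. Qed.

Lemma card_Gsecond_le_rpow_nil k d p (G : {set word 0 k}) :
  (INR #|Gsecond d G| <= rpow p (INR #|Gprime d G|))%R.
Proof.
have -> : Gprime d G = G.
  by apply/setP=> w; rewrite inE andb_idr // => _; apply/forallP=> -[].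
have le_G1 : #|G| <= 1 by rewrite (leq_trans (max_card _)) // card_ffun !card_ord.
have := INR_leq (leq_imset_card (fword d) G); rewrite -/(Gsecond d G).
case: #|G| le_G1 => [|[|//]] _ /=; first by rewrite rpow0.
by rewrite rpow_gt0 ?Rpower_1_l //; apply: Rlt_0_1.
Qed.

Lemma card_Gsecond_le_rpow k d p : 0 < d -> d < k -> (1 <= p)%R ->
  Rpower (INR d) p = INR (k - d + 1) ->
  forall n (G : {set word n k}), closed_repl d G ->
  (INR #|Gsecond d G| <= rpow p (INR #|Gprime d G|))%R.
Proof.
move=> d_gt0 d_lt_k p_ge1 dp n; elim: n => [|n IHn] G clG.
  exact: card_Gsecond_le_rpow_nil.
set j0 : 'I_k := Ordinal d_lt_k.
set U := \bigcup_(i : 'I_k | i < d) slice G i; set H := slice G j0.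
have clU : closed_repl d U.
  by apply: closed_repl_bigcup => i _; apply: closed_repl_slice.
have IHU := IHn U clU; have IHH := IHn H (closed_repl_slice clG).
have G2 := INR_leq (card_Gsecond_le (j0 := j0) d_gt0 (leqnn d) clG).
have G1 := INR_leq (card_Gprime_ge (j0 := j0) d_gt0 (leqnn d) clG).
have HU := INR_leq (subset_leq_card (Gprime_subset d
  (slice_high_subset_low (j0 := j0) d_gt0 (leqnn d) clG))).
rewrite plus_INR mult_INR in G1; rewrite plus_INR mult_INR in G2.
have dp1 : INR (k - d) = (Rpower (1 + (INR d - 1)) p - 1)%R.
  by rewrite Rplus_minus dp plus_INR /=; ring.
rewrite dp1 in G2; rewrite minus_INR ?INR_1 in G1; last exact/leP.
have q_ge0 : (0 <= Rpower (1 + (INR d - 1)) p - 1)%R by rewrite -dp1; apply: pos_INR.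
have := Rmult_le_compat_l _ _ _ q_ge0 IHH.
have c_ge0 : (0 <= INR d - 1)%R by have := INR_leq d_gt0; rewrite /=; lra.
have := rpow_add_mul_ge p_ge1 c_ge0 (pos_INR _) HU.
have := rpow_le (Rle_trans _ _ _ Rle_0_1 p_ge1) G1.
rewrite -/U -/H in G1 G2 HU *; lra.
Qed.

Lemma card_Gsecond_gt0 n k d (G : {set word n k}) :
  0 < #|Gprime d G| -> 0 < #|Gsecond d G|.
Proof.
rewrite !card_gt0 /Gsecond imset_eq0; apply: contraNneq => ->.
by apply/eqP/setP=> g; rewrite !inE.
Qed.

Theorem lemma12 (d k n : nat) (G : {set word n k}) :
  (2 <= d)%N -> (2 * d <= k + 1)%N -> (1 <= n)%N ->
  closed_repl d G ->
  (#|Gprime d G| = 0%N /\ #|Gsecond d G| = 0%N) \/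
  (logb (INR (k - d + 1)) (INR #|Gsecond d G|)
     <= logb (INR d) (INR #|Gprime d G|))%R.
Proof.
move=> d_ge2 dk _ clG; have d_lt_k : d < k by lia.
have d_gt1 : (1 < INR d)%R by apply: (lt_INR 1); apply/ltP.
have m_ge_d : (INR d <= INR (k - d + 1))%R by apply: INR_leq; lia.
have bound := card_Gsecond_le_rpow (ltnW d_ge2) d_lt_k (ln_ratio_ge1 d_gt1 m_ge_d)
  (Rpower_ln_ratio d_gt1 (Rlt_le_trans _ _ _ (Rlt_trans _ _ _ Rlt_0_1 d_gt1) m_ge_d)) clG.
have [Gp0|Gp_gt0] := posnP #|Gprime d G|.
  left; split=> //; apply: INR_eq; rewrite Gp0 rpow0 in bound.
  exact: Rle_antisym bound (pos_INR _).
right; rewrite rpow_gt0 in bound; last exact/lt_0_INR/ltP.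
apply: logb_le_of_le_Rpower bound => //; first lra.
exact/lt_0_INR/ltP/card_Gsecond_gt0.
Qed.
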